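(* Let $X$ be a Hausdorff space. The following are equivalent: (a) $X$ is hereditarily disconnected; (b) there is a positive integer $n$ such that $\mathcal{F}_n(X)$ is hereditarily disconnected; (b') for every positive integer $n$, $\mathcal{F}_n(X)$ is hereditarily disconnected; (c) $\mathcal{F}(X)$ is hereditarily disconnected.
   Context: $\mathcal{F}(X)$ is the set of nonempty finite subsets of $X$ and $\mathcal{F}_n(X)$ the set of nonempty subsets with at most $n$ points, with the Vietoris topology (generated by $U^+=\{A: A\subset U\}$ and $U^-=\{A: A\cap U\neq\emptyset\}$ for $U$ open in $X$). A space is hereditarily disconnected if every nonempty connected subset is a singleton. *)

From HB Require Import structures.
From mathcomp Require Import all_boot all_order finmap.
From mathcomp Require Import all_classical all_reals all_analysis.
Set Implicit Arguments. Unset Strict Implicit. Unset Printing Implicit Defensive.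
Local Open Scope classical_set_scope.
Local Open Scope fset_scope.

Definition hereditarily_disconnected (T : topologicalType) : Prop :=
  forall A : set T, A !=set0 -> connected A -> exists x, A = [set x].

Section Vietoris.
Variables (X : topologicalType) (P : pred {fset X}).

Definition vietoris : Type := {A : {fset X} | P A}.
HB.instance Definition _ := Choice.on vietoris.

Definition vplus (U : set X) : set vietoris :=
  [set A | forall x, x \in val A -> U x].
Definition vminus (U : set X) : set vietoris :=
  [set A | exists2 x, x \in val A & U x].

Definition vietoris_subbase (i : set X * bool) : set vietoris :=
  if i.2 then vplus i.1 else vminus i.1.
Definition vietoris_index : set (set X * bool) := [set i | open i.1].

HB.instance Definition _ :=
  isSubBaseTopological.Build vietoris vietoris_index vietoris_subbase.
End Vietoris.

Definition Fin (X : topologicalType) : topologicalType :=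
  vietoris (fun A : {fset X} => A != fset0).
Definition Fin_n (X : topologicalType) (n : nat) : topologicalType :=
  vietoris (fun A : {fset X} => (A != fset0) && (#|` A| <= n)%N).

(* Sending x to {x} embeds X into each of these hyperspaces, so hereditary
   disconnectedness passes from the hyperspace to X.  Conversely, let C be a
   connected set of finite sets and Z = {(B, x) | B \in C, x \in B}.  The
   first projection maps every nonempty relatively clopen subset of Z onto C,
   since the image is relatively open and closed in C.  Given B1, B2 in C
   and x1 in B1, shrink a relatively clopen W containing (B1, x1) as long as
   W is disconnected: the piece left out still meets the finite fiber of W
   over B2, so that fiber loses a point each time.  The process ends with a
   connected W, whose projection to X is connected, hence equal to {x1}, and
   which meets the fiber over B2; so x1 \in B2.  Thus B1 is a subset of B2,
   and B1 = B2 by symmetry. *)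

From HB Require Import structures.
From mathcomp Require Import all_boot all_order finmap.
From mathcomp Require Import all_classical all_reals all_analysis.

Set Implicit Arguments.
Unset Strict Implicit.
Unset Printing Implicit Defensive.

Local Open Scope classical_set_scope.

Section clopen_in.
Variable T : topologicalType.
Implicit Types A S W : set T.

Definition clopen_in A W :=
  (exists2 U, open U & W = A `&` U) /\ (exists2 F, closed F & W = A `&` F).

Lemma clopen_in_refl A : clopen_in A A.
Proof. by split; exists setT; rewrite ?setIT //; exact: openT. Qed.

Lemma clopen_in_sub A W : clopen_in A W -> W `<=` A.
Proof. by move=> [ [U _ ->] _] x []. Qed.

Lemma clopen_in_trans A W S : clopen_in A W -> clopen_in W S -> clopen_in A S.
Proof.
move=> [[U oU eU] [F cF eF]] [[U' oU' eU'] [F' cF' eF']]; split.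
  by exists (U `&` U'); [exact: openI | rewrite eU' eU setIA].
by exists (F `&` F'); [exact: closedI | rewrite eF' eF setIA].
Qed.

Lemma clopen_in_setD A W S :
  clopen_in A W -> clopen_in W S -> clopen_in A (W `\` S).
Proof.
move=> [[U oU eU] [F cF eF]] [[U' oU' eU'] [F' cF' eF']].
have eSO : W `\` S = W `&` ~` F'.
  by rewrite eF' setDE setCI setIUr setICr set0U.
have eSF : W `\` S = W `&` ~` U'.
  by rewrite eU' setDE setCI setIUr setICr set0U.
split.
  exists (U `&` ~` F'); first exact: (openI oU (closed_openC cF')).
  by rewrite eSO eU setIA.
exists (F `&` ~` U'); first exact: (closedI cF (open_closedC oU')).
by rewrite eSF eF setIA.
Qed.

Lemma locally_clopen_in A S : S `<=` A ->
  (forall x, S x -> exists2 N, nbhs x N & A `&` N `<=` S) ->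
  (forall x, A x -> ~ S x -> exists2 N, nbhs x N & A `&` N `<=` ~` S) ->
  clopen_in A S.
Proof.
move=> SA inS outS; split.
  exists (interior (S `|` ~` A)); first exact: open_interior.
  apply/seteqP; split=> [x Sx|x [Ax]]; last by move/interior_subset => [].
  split; first exact: SA.
  have [N Nx NS] := inS x Sx; apply: filterS Nx => y Ny.
  by have [Ay|nAy] := pselect (A y); [left; exact: NS | right].
exists (~` interior (~` S `|` ~` A)); first exact/open_closedC/open_interior.
apply/seteqP; split=> [x Sx|x [Ax nSx]].
  by split; [exact: SA | move/interior_subset => [] //; apply; exact: SA].
apply: contrapT => nSx'; apply: nSx; have [N Nx NS] := outS x Ax nSx'.
apply: filterS Nx => y Ny.
by have [Ay|nAy] := pselect (A y); [left; exact: NS | right].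
Qed.

Lemma not_connected_clopen_in A W p : clopen_in A W -> ~ connected W -> W p ->
  exists W1, [/\ clopen_in A W1, clopen_in A (W `\` W1), W1 `<=` W, W1 p
                 & W `\` W1 !=set0].
Proof.
move=> cW /existsNP[S /not_implyP[S0 /not_implyP[oS /not_implyP[cS neq]]]] Wp.
have cSW : clopen_in W S by [].
have SW := clopen_in_sub cSW.
have [Sp|nSp] := pselect (S p).
  exists S; split => //.
  - exact: clopen_in_trans cW cSW.
  - exact: clopen_in_setD cW cSW.
  apply: contrapT => /set0P/negP/negPn/eqP WS0; apply: neq.
  apply/seteqP; split => // x Wx; apply: contrapT => nSx.
  by have : (W `\` S) x by []; rewrite WS0.
have eS : W `\` (W `\` S) = S.
  by rewrite setDE setCI setCK setIUr setICr set0U; exact/setIidr.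
exists (W `\` S); rewrite eS; split => //.
- exact: clopen_in_setD cW cSW.
- exact: clopen_in_trans cW cSW.
Qed.

End clopen_in.

Lemma continuous_inj_hereditarily_disconnected (S T : topologicalType)
    (f : S -> T) : continuous f -> injective f ->
  hereditarily_disconnected T -> hereditarily_disconnected S.
Proof.
move=> cf injf hdT A [a Aa] cA; exists a; apply/seteqP; split=> [b Ab|_ -> //].
have fA0 : f @` A !=set0 by exists (f a), a.
have [t ft] := hdT _ fA0
  (connected_continuous_connected cA (continuous_subspaceT cf)).
have fAt c : A c -> f c = t.
  move=> Ac; have : (f @` A) (f c) by exists c.
  by rewrite ft.
by apply: injf; rewrite !fAt.
Qed.

Section vietoris.
Variables (X : topologicalType) (P : pred {fset X}).
Local Notation V := (vietoris P).

Lemma vietoris_subbase_open (i : set X * bool) :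
  vietoris_index i -> open (vietoris_subbase i : set V).
Proof.
move=> oi; exists [set vietoris_subbase i]; last by rewrite bigcup_set1.
move=> _ ->; exists [fset i]%fset; last by rewrite set_fset1 bigcap_set1.
by move=> j; rewrite !inE => /eqP ->.
Qed.

Lemma vplus_open (U : set X) : open U -> open (vplus U : set V).
Proof. exact: (@vietoris_subbase_open (U, true)). Qed.

Lemma vminus_open (U : set X) : open U -> open (vminus U : set V).
Proof. exact: (@vietoris_subbase_open (U, false)). Qed.

Lemma vietoris_continuous (Y : topologicalType) (f : Y -> V) :
  (forall i, vietoris_index i -> open (f @^-1` vietoris_subbase i)) ->
  continuous f.
Proof.
move=> fsub y N [B [[Bs sBs eB] fyB BN]].
move: fyB; rewrite -eB => -[F BsF fyF].
have [D sD eF] := sBs F BsF; subst F.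
apply: (@filterS _ _ _ (\bigcap_(i in [set` D]) f @^-1` vietoris_subbase i)).
  move=> z Dz; apply/BN; rewrite -eB.
  by exists (\bigcap_(i in [set` D]) vietoris_subbase i).
apply: filter_bigI => i iD; apply: open_nbhs_nbhs; split; last exact: fyF.
exact/fsub/set_mem/sD.
Qed.

Lemma continuous_vietoris_fset1 (P1 : forall x, P [fset x]%fset) :
  continuous (fun x => exist _ [fset x]%fset (P1 x) : V).
Proof.
apply: vietoris_continuous => -[U b] oU; rewrite (_ : _ @^-1` _ = U) //.
apply/seteqP; split=> x; case: b {oU} => /=.
- by apply; exact: fset11.
- by case=> y /fset1P ->.
- by move=> Ux y /fset1P ->.
- by exists x => //; exact: fset11.
Qed.

End vietoris.

Section connected_hyperspace.
Variables (X : topologicalType) (P : pred {fset X}) (C : set (vietoris P)).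
Local Notation V := (vietoris P).

Let Z : set (V * X) := [set z | C z.1 /\ z.2 \in val z.1].

Lemma fst_clopen_in_open W : clopen_in Z W ->
  forall B, (fst @` W) B -> exists2 N, nbhs B N & C `&` N `<=` fst @` W.
Proof.
move=> [[U oU eU] _] _ [[B x] Wx <-] /=.
have [[_ xB] Ux] : Z (B, x) /\ U (B, x) by rewrite eU in Wx.
have [[Q R] /= [QB Rx] QRU] : nbhs (B, x) U by exact: open_nbhs_nbhs.
exists (Q `&` vminus (interior R)).
  apply: filterI => //; apply: open_nbhs_nbhs; split.
    exact/vminus_open/open_interior.
  by exists x.
move=> B' [CB' [QB' [y yB' Ry]]]; exists (B', y) => //.
by rewrite eU; split => //; apply: QRU; split => //; exact: interior_subset.
Qed.

Lemma fst_clopen_in_closed W : clopen_in Z W ->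
  forall B, C B -> ~ (fst @` W) B ->
  exists2 N, nbhs B N & C `&` N `<=` ~` (fst @` W).
Proof.
move=> [_ [F cF eF]] B CB nWB.
have /choice[QR QRF] : forall x, exists QR : set V * set X, x \in val B ->
    [/\ nbhs B QR.1, nbhs x QR.2 & QR.1 `*` QR.2 `<=` ~` F].
  move=> x; have [xB|_] := boolP (x \in val B); last by exists (setT, setT).
  have [[Q R] /= [QB Rx] QRF] : nbhs (B, x) (~` F).
    apply: open_nbhs_nbhs; split; first exact: closed_openC.
    by move=> Fx; apply: nWB; exists (B, x); rewrite // eF.
  by exists (Q, R).
exists ((\bigcap_(x in [set` val B]) (QR x).1) `&`
        vplus (\bigcup_(x in [set` val B]) interior (QR x).2)).
  apply: filterI; first by apply: filter_bigI => x /QRF[].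
  apply: open_nbhs_nbhs; split.
    by apply: vplus_open; apply: bigcup_open => x _; exact: open_interior.
  by move=> x xB; exists x => //; have [] := QRF x xB.
move=> B' [CB' [QB' RB']] [[B'' y] + /= eB''].
rewrite eF eB'' => -[[_ yB'] Fy].
have [x xB Ry] := RB' y yB'.
have [_ _ QRnF] := QRF x xB.
by apply: (QRnF (B', y)) => //; split; [exact: QB' | exact: interior_subset].
Qed.

Hypothesis cC : connected C.

Lemma fst_clopen_in W : clopen_in Z W -> W !=set0 -> fst @` W = C.
Proof.
move=> cW [[B x] Wx]; have [WU WF] : clopen_in C (fst @` W).
  apply: locally_clopen_in => //; last exact: fst_clopen_in_closed.
  - by move=> _ [z /(clopen_in_sub cW)[Cz _] <-].
  - exact: fst_clopen_in_open.
by apply: cC => //; exists B, (B, x).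
Qed.

Hypothesis hdX : hereditarily_disconnected X.

Lemma mem_fiber_clopen_in B1 B2 x1 : C B2 -> forall n (S : {fset X}) W,
  (#|` S| < n)%N -> clopen_in Z W -> W (B1, x1) ->
  (forall y, W (B2, y) -> y \in S) -> x1 \in val B2.
Proof.
move=> CB2; elim=> [//|n IHn] S W ltSn cW Wx1 WS.
have fiber_B2 W' : clopen_in Z W' -> W' !=set0 -> exists y, W' (B2, y).
  move=> cW' W'0; have : (fst @` W') B2 by rewrite fst_clopen_in.
  by case=> -[B y] Wy /= eB; exists y; rewrite -eB.
have [cnW|ncW] := pselect (connected W).
  have [y Wy] := fiber_B2 W cW (ex_intro _ _ Wx1).
  have sndW0 : snd @` W !=set0 by exists x1, (B1, x1).
  have [x sndWx] := hdX sndW0 (connected_continuous_connected cnW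
    (continuous_subspaceT (fun _ => cvg_snd))).
  have [_ yB2] := clopen_in_sub cW Wy.
  have : (snd @` W) x1 /\ (snd @` W) y.
    by split; [exists (B1, x1) | exists (B2, y)].
  by rewrite sndWx => -[/= -> yx]; rewrite -yx.
have [W1 [cW1 cW2 W1W W1x1 W20]] := not_connected_clopen_in cW ncW Wx1.
have [y [Wy nW1y]] := fiber_B2 _ cW2 W20.
apply: (IHn (S `\ y)%fset W1) => //.
  by move: ltSn; rewrite (cardfsD1 y) WS.
move=> y' W1y'; rewrite in_fsetD1 WS ?andbT; last exact: W1W.
by apply: contraPneq nW1y => <-.
Qed.

Lemma connected_vietoris_subset B1 B2 :
  C B1 -> C B2 -> {subset val B1 <= val B2}.
Proof.
move=> CB1 CB2 x xB1.
apply: (@mem_fiber_clopen_in B1 B2 x CB2 #|` val B2|.+1 (val B2) Z) => //.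
- exact: clopen_in_refl.
- by move=> y [].
Qed.

End connected_hyperspace.

Lemma hereditarily_disconnected_vietoris (X : topologicalType)
    (P : pred {fset X}) :
  hereditarily_disconnected X -> hereditarily_disconnected (vietoris P).
Proof.
move=> hdX C [B CB] cC; exists B; apply/seteqP; split=> [B' CB'|_ -> //].
have sub := connected_vietoris_subset cC hdX.
by apply/val_inj/fsetP => x; apply/idP/idP; [exact: sub | exact: sub].
Qed.

Lemma hereditarily_disconnected_vietorisP (X : topologicalType)
    (P : pred {fset X}) :
  (forall x, P [fset x]%fset) ->
  hereditarily_disconnected (vietoris P) <-> hereditarily_disconnected X.
Proof.
move=> P1; split; last exact: hereditarily_disconnected_vietoris.
apply: continuous_inj_hereditarily_disconnected
  (continuous_vietoris_fset1 (P1 := P1)) _.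
by move=> x y /(congr1 val)/fset1_inj.
Qed.

Theorem corollary5p10 (X : topologicalType) : hausdorff_space X ->
  [/\ (hereditarily_disconnected X <->
         exists n : nat, (0 < n)%N /\ hereditarily_disconnected (Fin_n X n)),
      (hereditarily_disconnected X <->
         forall n : nat, (0 < n)%N -> hereditarily_disconnected (Fin_n X n))
    & (hereditarily_disconnected X <-> hereditarily_disconnected (Fin X))].
Proof.
move=> _.
have fset1_neq0 (x : X) : [fset x]%fset != fset0.
  by apply/fset0Pn; exists x; exact: fset11.
have hdFn n : (0 < n)%N ->
    hereditarily_disconnected (Fin_n X n) <-> hereditarily_disconnected X.
  move=> n0; apply: hereditarily_disconnected_vietorisP => x.
  by rewrite fset1_neq0 cardfs1.
have hdF : hereditarily_disconnected (Fin X) <-> hereditarily_disconnected X.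
  exact: hereditarily_disconnected_vietorisP fset1_neq0.
split.
- split=> [hdX|[n [n0 /(hdFn n n0) //]]].
  by exists 1%N; split => //; apply/(hdFn 1%N isT).
- split=> [hdX n n0|hdF_n]; first exact/(hdFn n n0).
  exact/(hdFn 1%N isT)/hdF_n.
- exact: iff_sym hdF.
Qed.
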